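(* Let $\varepsilon>0$, $\beta\in(0,1)$, $\delta\in(0,1)$, and let $G$ be a graph with at least one edge. Run: set $T=-\frac{8}{\varepsilon}\ln\frac4\beta$, $\tilde T=T+\mathrm{Lap}(4/\varepsilon)$; for $\tau=1,2,4,8,\dots$ compute $\tilde Q_\tau=Q_{\mathrm{Del\text{-}N}}(G,\tau)+\mathrm{Lap}(4/\varepsilon)$ and stop at the first $\tau$ with $\tilde Q_\tau>\tilde T$; then output $$\tau^*=\tau+|Q_{\mathrm{Del\text{-}N}}(G,\tau)|+\mathrm{Lap}(2/\varepsilon)+\frac2\varepsilon\ln\max\Big(\frac1\delta,\frac2\beta\Big)+1.$$ Then with probability at least $1-\beta$, $$\tau^*\le2\deg(G)+\frac8\varepsilon\ln\log(4\deg(G))+\frac{16}{\varepsilon}\ln\frac4\beta+\frac4\varepsilon\ln\max\Big(\frac1\delta,\frac2\beta\Big)+1$$ and $$N_{\tau^*}(G)\le\frac8\varepsilon\ln\log(4\deg(G))+\frac{16}\varepsilon\ln\frac4\beta.$$ Furthermore, with probability at least $1-\delta$, $\tau^*+N_{\tau^*}(G)\le2\tau^*$.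
   Context: Graphs are finite, simple, undirected; $\deg(G)$ is the maximum degree; $N_t(G)$ is the number of nodes of $G$ of degree at least $t$. $H\subseteq G$ means $H$ is obtained from $G$ by deleting a set of nodes with all their incident edges. $Q_{\mathrm{Del\text{-}N}}(G,\tau)=-\min\{|V(G)|-|V(G^* )|: G^*\subseteq G,\ \deg(G^* )\le\tau\}$. $\mathrm{Lap}(b)$ has density $\frac1{2b}e^{-|x|/b}$; all draws are independent. $\ln$ is the natural logarithm and $\log$ the base-2 logarithm (counting the doubling steps $\tau=1,2,4,\dots$). *)

From HB Require Import structures.
From mathcomp Require Import all_boot all_order all_algebra.
From mathcomp Require Import all_classical all_reals all_analysis.
Set Implicit Arguments. Unset Strict Implicit. Unset Printing Implicit Defensive.
Import Order.TTheory GRing.Theory Num.Theory.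
Local Open Scope classical_set_scope.
Local Open Scope ring_scope.

Definition simple_graph (V : finType) (e : rel V) : Prop :=
  symmetric e /\ irreflexive e.

(* degree of x in the induced subgraph G[S] (S = nodes kept) *)
Definition sdeg (V : finType) (e : rel V) (S : {set V}) (x : V) : nat :=
  #|[set y in S | e x y]|.

Definition maxdeg_sub (V : finType) (e : rel V) (S : {set V}) : nat :=
  \max_(x in S) sdeg e S x.

Definition maxdeg (V : finType) (e : rel V) : nat := maxdeg_sub e [set: V].

Definition gdeg (V : finType) (e : rel V) (x : V) : nat := sdeg e [set: V] x.

Definition delN_cost (V : finType) (e : rel V) (tau : nat) : nat :=
  \big[minn/ #|V|]_(S : {set V} | (maxdeg_sub e S <= tau)%N) (#|V| - #|S|)%N.

Definition Q_delN {R : realType} (V : finType) (e : rel V) (tau : nat) : R :=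
  - (delN_cost e tau)%:R.

Definition N_at_least {R : realType} (V : finType) (e : rel V) (t : R) : nat :=
  #|[set x : V | t <= (gdeg e x)%:R]|.

Definition log2 {R : realType} (x : R) : R := ln x / ln 2.

Definition laplace_pdf {R : realType} (b : R) (x : R) : R :=
  (2 * b)^-1 * expR (- `|x| / b).

Definition is_laplace {R : realType} d (Omega : measurableType d)
  (P : probability Omega R) (b : R) (X : Omega -> R) : Prop :=
  measurable_fun setT X /\
  forall A : set R, measurable A ->
    P (X @^-1` A) = (\int[@lebesgue_measure R]_(x in A) (laplace_pdf b x)%:E)%E.

Definition mutually_independent {R : realType} d (Omega : measurableType d)
  (P : probability Omega R) (X : nat -> Omega -> R) : Prop :=
  forall (s : seq nat) (A : nat -> set R), uniq s ->
    (forall i, i \in s -> measurable (A i)) ->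
    P (\bigcap_(i in [set i | i \in s]) (X i @^-1` A i)) =
    (\prod_(i <- s) P (X i @^-1` A i))%E.

(* Noise family X : nat -> Omega -> R:
     X 0        : threshold noise, Lap(4/eps)
     X 1        : final noise, Lap(2/eps)
     X (i.+2)   : noise added to Q_{Del-N}(G, 2^i), Lap(4/eps)          *)
Definition threshold {R : realType} (eps beta : R) : R :=
  - (8 / eps) * ln (4 / beta).

Definition round_passes {R : realType} (V : finType) (e : rel V) (eps beta : R)
  d (Omega : measurableType d) (X : nat -> Omega -> R) (i : nat) (w : Omega) : Prop :=
  Q_delN e (2 ^ i) + X i.+2 w > threshold eps beta + X 0%N w.

Definition stops_at {R : realType} (V : finType) (e : rel V) (eps beta : R)
  d (Omega : measurableType d) (X : nat -> Omega -> R) (i : nat) (w : Omega) : Prop :=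
  round_passes e eps beta X i w /\
  forall j, (j < i)%N -> ~ round_passes e eps beta X j w.

Definition tau_star {R : realType} (V : finType) (e : rel V) (eps beta delta : R)
  d (Omega : measurableType d) (X : nat -> Omega -> R) (i : nat) (w : Omega) : R :=
  (2 ^ i)%:R + `|Q_delN e (2 ^ i)| + X 1%N w
  + (2 / eps) * ln (Num.max (delta^-1) (2 / beta)) + 1.

From HB Require Import structures.
From mathcomp Require Import all_boot all_order all_algebra.
From mathcomp Require Import all_classical all_reals all_analysis.
From mathcomp Require Import measurable_realfun ring lra zify.
Import Order.TTheory GRing.Theory Num.Theory.
Import numFieldTopology.Exports.
Local Open Scope classical_set_scope.
Local Open Scope ring_scope.

(* At round j the score Q_{Del-N}(G, 2^j) is minus the number c_j of nodes whose
   deletion brings the maximum degree down to 2^j; it vanishes once 2^j >= deg G.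
   After deleting such a set every surviving node has degree at most 2^j + c_j in
   G, so N_t(G) <= c_j for t > 2^j + c_j, and tau* exceeds 2^j + c_j unless the
   output noise is very negative.  Outside a few Laplace tail events (union bound)
   the first round i0 with 2^i0 >= deg G passes, so the run stops at some
   i <= i0 with 2^i <= 2 deg G, and passing bounds c_i by the threshold and the
   noises; the i0 + 1 <= log(4 deg G) rounds involved give the ln log term.  For the
   last claim the run must stop: by independence it is unlikely that m rounds after
   i0 all draw noise below a level the threshold noise does not reach. *)

Section laplace_tail_integral.
Context {R : realType}.
Local Notation mu := (@lebesgue_measure R).
Variable b : R.
Hypothesis b_gt0 : 0 < b.

Lemma laplace_pdf_ge0 x : 0 <= laplace_pdf b x.
Proof. by rewrite /laplace_pdf mulr_ge0 ?expR_ge0 // invr_ge0 mulr_ge0 // ltW. Qed.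

Lemma continuous_laplace_pdf : continuous (laplace_pdf b).
Proof.
move=> x; apply: (@continuousM _ R^o (cst _) (fun x => expR (- `|x| / b))).
  exact: cst_continuous.
apply: continuous_comp; last exact: continuous_expR.
apply: (@continuousM _ R^o (fun x => - `|x|) (cst _)); last exact: cst_continuous.
by apply: (@continuousN _ R^o); exact: (@norm_continuous _ R^o).
Qed.

Let antiderivative x := - expR (- b^-1 * x) / 2.

Let continuous_antiderivative : continuous antiderivative.
Proof.
move=> x; apply: (@continuousM _ R^o (fun x => - expR (- b^-1 * x)) (cst _)); last first.
  exact: cst_continuous.
apply: (@continuousN _ R^o); apply: continuous_comp; last exact: continuous_expR.
by apply: continuousM => //; exact: cst_continuous.
Qed.

(* On ]0, +oo[ the Laplace density is half the exponential density of rate b^-1. *)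
Let derive1_antiderivative : {in `]0, +oo[, antiderivative^`()%classic =1 laplace_pdf b}.
Proof.
move=> x; rewrite in_itv /= andbT => x0.
rewrite /antiderivative derive1Mr // derive1_exponential_pdf ?in_itv /= ?andbT //.
rewrite exponential_pdfE ?ltW // /laplace_pdf ger0_norm ?ltW //.
have -> : - x / b = - b^-1 * x by ring.
by field; rewrite gt_eqF.
Qed.

Lemma integral_laplace_pdf_itvcy t : 0 <= t ->
  (\int[mu]_(x in `[t, +oo[) (laplace_pdf b x)%:E = (expR (- t / b) / 2)%:E)%E.
Proof.
move=> t0; rewrite (@ge0_continuous_FTC2y _ _ antiderivative t 0).
- by rewrite -EFinB sub0r /antiderivative mulNr opprK; congr (expR _ / 2)%:E; ring.
- by move=> x _; exact: laplace_pdf_ge0.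
- exact/continuous_subspaceT/continuous_laplace_pdf.
- have -> : 0 = - 0 / 2 :> R by rewrite oppr0 mul0r.
  apply: cvgMl; apply: cvgN.
  rewrite [X in X @ _](_ : _ = (fun z => expR (- z)) \o *%R b^-1); last first.
    by apply/funext => x /=; rewrite mulNr.
  apply: (@cvg_comp _ _ _ _ _ _ (pinfty_nbhs R)); last exact: cvgr_expR.
  by apply: gt0_cvgMry; rewrite ?invr_gt0 //; exact: cvg_id.
- by move=> x _; rewrite /antiderivative; exact: ex_derive.
- exact/cvg_at_right_filter/continuous_antiderivative.
- move=> x; rewrite in_itv /= andbT => tx; apply: derive1_antiderivative.
  by rewrite in_itv /= andbT (le_lt_trans t0).
Qed.

Lemma integral_laplace_pdf_itvNyc t : 0 <= t ->
  (\int[mu]_(x in `]-oo, (- t)%R]) (laplace_pdf b x)%:E = (expR (- t / b) / 2)%:E)%E.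
Proof.
move=> t0; rewrite ge0_integration_by_substitutionNy.
- rewrite -integral_laplace_pdf_itvcy //; apply: eq_integral => x _.
  by rewrite /= /laplace_pdf normrN.
- exact/continuous_subspaceT/continuous_laplace_pdf.
- by move=> x _; exact: laplace_pdf_ge0.
Qed.
End laplace_tail_integral.

Section measurable_comparison.
Context {R : realType} {d : measure_display} {Omega : measurableType d}.

Lemma measurable_ler (f g : Omega -> R) : measurable_fun setT f -> measurable_fun setT g ->
  measurable [set w | f w <= g w].
Proof.
move=> mf mg; have -> : [set w | f w <= g w] = (g \- f) @^-1` `[0, +oo[.
  by apply/seteqP; split => w /=; rewrite in_itv /= andbT subr_ge0.
by rewrite -[X in measurable X]setTI; exact: measurable_funB.
Qed.

Lemma measurable_ltr (f g : Omega -> R) : measurable_fun setT f -> measurable_fun setT g ->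
  measurable [set w | f w < g w].
Proof.
move=> mf mg; have -> : [set w | f w < g w] = (g \- f) @^-1` `]0, +oo[.
  by apply/seteqP; split => w /=; rewrite in_itv /= andbT subr_gt0.
by rewrite -[X in measurable X]setTI; exact: measurable_funB.
Qed.
End measurable_comparison.

Section real_probability.
Context {R : realType} {d : measure_display} {Omega : measurableType d}.
Variable P : probability Omega R.

(* Real-valued probability, so that tail bounds combine by real arithmetic. *)
Definition pr (A : set Omega) : R := fine (P A).

Lemma prE A : measurable A -> P A = (pr A)%:E.
Proof. by move=> mA; rewrite /pr fineK ?fin_num_measure. Qed.

Lemma pr_setU_le A B : measurable A -> measurable B -> pr (A `|` B) <= pr A + pr B.
Proof.
move=> mA mB; rewrite -lee_fin EFinD -!prE //; last exact: measurableU.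
exact: measureU2.
Qed.

Lemma pr_setU_le_add A B a c : measurable A -> measurable B ->
  pr A <= a -> pr B <= c -> pr (A `|` B) <= a + c.
Proof. by move=> mA mB pA pB; exact: le_trans (pr_setU_le _ _ mA mB) (lerD pA pB). Qed.

Lemma pr_bigsetU_le n (F : nat -> set Omega) : (forall i, measurable (F i)) ->
  pr (\big[setU/set0]_(i < n) F i) <= \sum_(i < n) pr (F i).
Proof.
move=> mF; rewrite -lee_fin -sumEFin /pr.
rewrite fineK ?fin_num_measure //; last exact: bigsetU_measurable.
under [X in (_ <= X)%E]eq_bigr => i _ do rewrite fineK ?fin_num_measure //.
apply: (@content_subadditive _ _ _ P) => //; last exact: bigsetU_measurable.
Qed.

Lemma probability_ge_of_bad_event (A B : set Omega) p :
  measurable A -> measurable B -> pr B <= p -> ~` B `<=` A -> ((1 - p)%:E <= P A)%E.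
Proof.
move=> mA mB pB BA; apply: (@le_trans _ _ (P (~` B))); last first.
  by apply: le_measure; rewrite ?inE //; exact: measurableC.
by rewrite probability_setC // prE // -EFinB lee_fin lerB.
Qed.
End real_probability.

Section laplace_tail_probability.
Context {R : realType} {d : measure_display} {Omega : measurableType d}.
Variables (P : probability Omega R) (b : R) (X : Omega -> R).
Hypotheses (b_gt0 : 0 < b) (lapX : is_laplace P b X).

Let laplace_tail_ln y : 1 <= y -> expR (- (b * ln y) / b) / 2 = (2 * y)^-1.
Proof.
move=> y1; rewrite mulNr mulrAC divff ?gt_eqF // mul1r expRN.
by rewrite lnK ?posrE ?(lt_le_trans ltr01) // invfM mulrC.
Qed.

Lemma pr_laplace_ge_ln y : 1 <= y -> pr P [set w | b * ln y <= X w] = (2 * y)^-1.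
Proof.
move=> y1; rewrite /pr -preimage_itvcy lapX.2 // integral_laplace_pdf_itvcy //.
  by rewrite laplace_tail_ln.
by rewrite mulr_ge0 ?ln_ge0 // ltW.
Qed.

Lemma pr_laplace_le_ln y : 1 <= y -> pr P [set w | X w <= - (b * ln y)] = (2 * y)^-1.
Proof.
move=> y1; rewrite /pr -preimage_itvNyc lapX.2 // integral_laplace_pdf_itvNyc //.
  by rewrite laplace_tail_ln.
by rewrite mulr_ge0 ?ln_ge0 // ltW.
Qed.

Lemma pr_laplace_abs_ge_ln y : 1 <= y -> pr P [set w | b * ln y <= `|X w|] <= y^-1.
Proof.
move=> y1; have -> : [set w | b * ln y <= `|X w|] =
    [set w | b * ln y <= X w] `|` [set w | X w <= - (b * ln y)].
  by apply/seteqP; split => w /=; rewrite ler_normr lerNr => /orP.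
have mX := lapX.1.
apply: (le_trans (pr_setU_le P _ _ _ _)); try by apply: measurable_ler.
by rewrite pr_laplace_ge_ln // pr_laplace_le_ln // invfM mulrC -splitr.
Qed.

Lemma probability_laplace_lt_ln y :
  1 <= y -> P (X @^-1` `]-oo, b * ln y[) = (1 - (2 * y)^-1)%:E.
Proof.
move=> y1; have mge : measurable [set w | b * ln y <= X w].
  by apply: measurable_ler => //; exact: lapX.1.
have -> : X @^-1` `]-oo, b * ln y[ = ~` [set w | b * ln y <= X w].
  by apply/seteqP; split => w /=; rewrite in_itv /= ltNge => /negP.
by rewrite probability_setC // prE // pr_laplace_ge_ln.
Qed.

End laplace_tail_probability.

Arguments pr_laplace_ge_ln {R d Omega P b X}.
Arguments pr_laplace_le_ln {R d Omega P b X}.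
Arguments pr_laplace_abs_ge_ln {R d Omega P b X}.
Arguments probability_laplace_lt_ln {R d Omega P b X}.

Section node_deletion.
Variables (V : finType) (e : rel V).

Lemma delN_cost_witness tau :
  exists2 S : {set V}, (maxdeg_sub e S <= tau)%N & delN_cost e tau = (#|V| - #|S|)%N.
Proof.
have S0 : (maxdeg_sub e finset.set0 <= tau)%N by rewrite /maxdeg_sub big_set0.
have [S PS eqS] := @eq_bigmin _ nat _ #|V| finset.set0
  (fun S => maxdeg_sub e S <= tau)%N (fun S => #|V| - #|S|)%N S0 (fun S _ => leq_subr _ _).
by exists S.
Qed.

Lemma delN_cost_le tau (S : {set V}) :
  (maxdeg_sub e S <= tau)%N -> (delN_cost e tau <= #|V| - #|S|)%N.
Proof.
move=> HS; exact: (@bigmin_le_cond _ nat _ #|V| S (fun S => maxdeg_sub e S <= tau)%N).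
Qed.

Lemma delN_cost_eq0 tau : (maxdeg e <= tau)%N -> delN_cost e tau = 0%N.
Proof. by move/delN_cost_le; rewrite cardsT subnn leqn0 => /eqP. Qed.

Lemma sdeg_le_maxdeg_sub {S : {set V}} {x} : x \in S -> (sdeg e S x <= maxdeg_sub e S)%N.
Proof. exact: leq_bigmax_cond. Qed.

Lemma gdeg_le_sdeg_add (S : {set V}) x : (gdeg e x <= sdeg e S x + #|~: S|)%N.
Proof.
apply: leq_trans (leq_card_setU _ _); apply: subset_leq_card.
by apply/fintype.subsetP => y; rewrite !inE /= => ->; case: (y \in S).
Qed.

Lemma N_at_least_le_delN_cost {R : realType} tau (t : R) :
  (tau + delN_cost e tau)%:R < t -> (N_at_least e t <= delN_cost e tau)%N.
Proof.
have [S HS ->] := delN_cost_witness tau; rewrite -(cardsC S) addKn => t_big.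
apply: subset_leq_card; apply/fintype.subsetP => x; rewrite !inE /= => t_le.
apply/negP => xS; suff : (gdeg e x)%:R < t by rewrite ltNge t_le.
apply: le_lt_trans t_big; rewrite ler_nat (leq_trans (gdeg_le_sdeg_add S x)) //.
by rewrite leq_add2r (leq_trans (sdeg_le_maxdeg_sub xS)).
Qed.

Lemma maxdeg_gt0 : (exists x y, e x y) -> (0 < maxdeg e)%N.
Proof.
move=> [x [y exy]]; apply: leq_trans _ (sdeg_le_maxdeg_sub (finset.in_setT x)).
by rewrite card_gt0; apply/set0Pn; exists y; rewrite !inE.
Qed.

End node_deletion.

Lemma exp2_up_log_le_double n : (0 < n)%N -> (2 ^ up_log 2 n <= 2 * n)%N.
Proof.
case: n => [|[|n]] // _.
have := up_log_gtn (isT : (1 < 2)%N) (isT : (1 < n.+2)%N).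
have : (0 < up_log 2 n.+2)%N by rewrite up_log_gt0.
by case: (up_log 2 n.+2) => // k _ /= /ltnW; rewrite expnS leq_pmul2l.
Qed.

Lemma up_log2S_le_log2 {R : realType} n :
  (0 < n)%N -> (up_log 2 n).+1%:R <= log2 (4 * n%:R : R).
Proof.
move=> n0; rewrite /log2 ler_pdivlMr ?ln_gt0 ?ltr1n // [leLHS]mulr_natl -lnXn //.
rewrite ler_ln ?posrE ?exprn_gt0 ?mulr_gt0 ?ltr0n //.
by rewrite -natrX -natrM ler_nat expnS; have := exp2_up_log_le_double _ n0; lia.
Qed.

Lemma exists_expr_le {R : realType} (q p : R) :
  0 <= q -> q < 1 -> 0 < p -> exists m, q ^+ m <= p.
Proof.
move=> q0 q1 p0; have q1' : `|q| < 1 by rewrite ger0_norm.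
have [N _ HN] := (cvgrPdist_lt _ _).1 (cvg_expr q1') p p0.
exists N; have := HN N (leqnn N).
by rewrite sub0r normrN ger0_norm ?exprn_ge0 // => /ltW.
Qed.

Lemma measurable_N_at_least {R : realType} {V : finType} (e : rel V) :
  measurable_fun setT (fun t : R => (N_at_least e t)%:R : R).
Proof.
apply: nonincreasing_measurable => // s t st; rewrite ler_nat.
by apply: subset_leq_card; apply/fintype.subsetP => x; rewrite !inE /= => /(le_trans st).
Qed.

Section noisy_doubling_run.
Context {R : realType} {V : finType} (e : rel V) (eps beta delta : R).
Context {d : measure_display} {Omega : measurableType d} (X : nat -> Omega -> R).

Lemma round_passes_of_maxdeg_le j w : (maxdeg e <= 2 ^ j)%N ->
  threshold eps beta + X 0%N w < X j.+2 w -> round_passes e eps beta X j w.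
Proof. by move=> /delN_cost_eq0 c0; rewrite /round_passes /Q_delN c0 oppr0 add0r. Qed.

Lemma stops_at_first j w : round_passes e eps beta X j w ->
  exists2 i, stops_at e eps beta X i w & (i <= j)%N.
Proof.
move=> pass_j.
have : exists j, threshold eps beta + X 0%N w < Q_delN e (2 ^ j) + X j.+2 w by exists j.
case/ex_minnP => i pass_i i_min; exists i; last exact: i_min.
split => // k k_lt_i pass_k.
by have := i_min k pass_k; rewrite leqNgt k_lt_i.
Qed.

Lemma tau_starE i w : tau_star e eps beta delta X i w =
  (2 ^ i)%:R + (delN_cost e (2 ^ i))%:R + X 1%N w
  + 2 / eps * ln (Num.max delta^-1 (2 / beta)) + 1.
Proof. by rewrite /tau_star /Q_delN normrN normr_nat. Qed.

Lemma N_at_least_tau_star_le i w :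
  - (2 / eps * ln (Num.max delta^-1 (2 / beta))) < X 1%N w ->
  (N_at_least e (tau_star e eps beta delta X i w) <= delN_cost e (2 ^ i))%N.
Proof. by move=> X1_big; apply: N_at_least_le_delN_cost; rewrite tau_starE natrD; lra. Qed.

Lemma measurable_tau_star i : measurable_fun setT (X 1%N) ->
  measurable_fun setT (tau_star e eps beta delta X i).
Proof.
move=> mX1; rewrite /tau_star.
by do 2 apply: measurable_funD => //; apply: measurable_funD.
Qed.

Lemma measurable_stopping_event (C : nat -> set Omega) :
  (forall i, measurable_fun setT (X i)) -> (forall i, measurable (C i)) ->
  measurable [set w | exists i, stops_at e eps beta X i w /\ C i w].
Proof.
move=> mX mC; have mpass j : measurable [set w | round_passes e eps beta X j w].
  by apply: (@measurable_ltr _ _ _ (fun w => _ + X 0%N w) (fun w => _ + X j.+2 w));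
    apply: measurable_funD.
have -> : [set w | exists i, stops_at e eps beta X i w /\ C i w] =
    \bigcup_i ([set w | round_passes e eps beta X i w]
      `&` \bigcap_(j in `I_i) ~` [set w | round_passes e eps beta X j w] `&` C i).
  by apply/seteqP; split => w /= [i]; [case=> -[] | move=> _ [[]]]; exists i.
apply: bigcupT_measurable => i; apply: measurableI => //; apply: measurableI => //.
by apply: bigcap_measurableType => j _; exact: measurableC.
Qed.

End noisy_doubling_run.

Arguments stops_at_first {R V e eps beta d Omega X j w}.
Arguments N_at_least_tau_star_le {R V} e {eps beta delta d Omega X} i {w}.

Section noisy_doubling_guarantees.
Context {R : realType} {d : measure_display} {Omega : measurableType d}.
Variables (P : probability Omega R) (V : finType) (e : rel V).
Variables (eps beta delta : R) (X : nat -> Omega -> R).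
Hypotheses (has_edge : exists x y, e x y) (eps_gt0 : 0 < eps).
Hypotheses (beta_gt0 : 0 < beta) (beta_lt1 : beta < 1).
Hypotheses (delta_gt0 : 0 < delta) (delta_lt1 : delta < 1).
Hypothesis lapX0 : is_laplace P (4 / eps) (X 0%N).
Hypothesis lapX1 : is_laplace P (2 / eps) (X 1%N).
Hypothesis lapX2 : forall i, is_laplace P (4 / eps) (X i.+2).
Hypothesis indepX : mutually_independent P X.

Local Notation b := (4 / eps).
Local Notation L := (ln (4 / beta)).
Local Notation M := (Num.max delta^-1 (2 / beta)).
Local Notation D := (maxdeg e).
(* Round i0 is the first with 2^i0 >= deg G; the i0 + 1 rounds up to it number at most k. *)
Local Notation i0 := (up_log 2 (maxdeg e)).
Local Notation k := (log2 (4 * (maxdeg e)%:R) : R).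

Let b_gt0 : 0 < b. Proof. by rewrite divr_gt0. Qed.
Let b'_gt0 : 0 < 2 / eps. Proof. by rewrite divr_gt0. Qed.
Let L_gt0 : 0 < L.
Proof. by apply: ln_gt0; rewrite ltr_pdivlMr // mul1r (lt_trans beta_lt1) // ltr1n. Qed.
Let M_gt1 : 1 < M.
Proof. by rewrite lt_max ltr_pdivlMr // mul1r (lt_trans beta_lt1) ?ltr1n ?orbT. Qed.
Let M_ge1 : 1 <= M. Proof. exact: ltW. Qed.

Let threshold_eq : threshold eps beta = - (2 * (b * L)).
Proof. by rewrite /threshold; field; rewrite gt_eqF. Qed.

Let measurable_X i : measurable_fun setT (X i).
Proof. by case: i => [|[|i]]; [exact: lapX0.1 | exact: lapX1.1 | exact: (lapX2 i).1]. Qed.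

Let measurable_ge_X i c : measurable [set w | c <= X i w].
Proof. exact: measurable_ler. Qed.

Let measurable_le_X i c : measurable [set w | X i w <= c].
Proof. exact: measurable_ler. Qed.

Let measurable_abs_ge_X i c : measurable [set w | c <= `|X i w|].
Proof.
apply: (measurable_ler (cst c) (Num.norm \o X i)) => //.
exact: measurableT_comp.
Qed.

#[local] Hint Resolve measurable_ge_X measurable_le_X measurable_abs_ge_X : core.

Let D_le : (D <= 2 ^ i0)%N. Proof. exact: up_logP. Qed.

Let i0S_le_k : (i0.+1)%:R <= k. Proof. exact/up_log2S_le_log2/maxdeg_gt0. Qed.

Let k_ge1 : 1 <= k. Proof. by apply: le_trans i0S_le_k; rewrite ler1n. Qed.

Let k_gt0 : 0 < k. Proof. exact: lt_le_trans ltr01 k_ge1. Qed.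

Let accuracy_event := [set w | exists i, stops_at e eps beta X i w /\
  (tau_star e eps beta delta X i w <=
     2 * D%:R + 8 / eps * ln k + 16 / eps * L + 4 / eps * ln M + 1 /\
   (N_at_least e (tau_star e eps beta delta X i w))%:R <= 8 / eps * ln k + 16 / eps * L)].

Let large_round_noise j := [set w | b * ln (4 / beta * k) <= X j.+2 w].

Let measurable_large_round_noise :
  measurable (\big[setU/set0]_(j < i0.+1) large_round_noise j).
Proof. by apply: bigsetU_measurable => j _; exact: measurable_ge_X. Qed.

(* Failure budget beta/4 + beta/8 + beta/8 + beta/2, each early round getting beta/(8k). *)
Let accuracy_failure :=
  [set w | b * L <= `|X 0%N w|] `|` [set w | X i0.+2 w <= - (b * L)]
  `|` \big[setU/set0]_(j < i0.+1) large_round_noise j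
  `|` [set w | 2 / eps * ln M <= `|X 1%N w|].

Let measurable_accuracy_failure : measurable accuracy_failure.
Proof. by repeat apply: measurableU. Qed.

Let pr_accuracy_failure : pr P accuracy_failure <= beta.
Proof.
have y1 : 1 <= 4 / beta.
  by rewrite ler_pdivlMr // mul1r (le_trans (ltW beta_lt1)) // ler1n.
have ky1 : 1 <= 4 / beta * k by exact: mulr_ege1.
have p0 : pr P [set w | b * L <= `|X 0%N w|] <= beta / 4.
  by rewrite -[beta / 4]invf_div; exact: pr_laplace_abs_ge_ln b_gt0 lapX0 _ y1.
have p1 : pr P [set w | X i0.+2 w <= - (b * L)] <= beta / 8.
  rewrite (pr_laplace_le_ln b_gt0 (lapX2 _)) // (_ : (2 * (4 / beta))^-1 = beta / 8) //.
  by field; rewrite gt_eqF.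
have p2 : pr P (\big[setU/set0]_(j < i0.+1) large_round_noise j) <= beta / 8.
  apply: le_trans (pr_bigsetU_le P _ large_round_noise (fun j => measurable_ge_X _ _)) _.
  under eq_bigr do rewrite (pr_laplace_ge_ln b_gt0 (lapX2 _)) //.
  rewrite sumr_const card_ord -[_ *+ i0.+1]mulr_natr.
  have -> : (2 * (4 / beta * k))^-1 = beta / 8 / k.
    by field; rewrite !gt_eqF.
  rewrite -mulrA ler_piMr ?divr_ge0 ?(ltW beta_gt0) // mulrC.
  by rewrite ler_pdivrMr // mul1r.
have p3 : pr P [set w | 2 / eps * ln M <= `|X 1%N w|] <= beta / 2.
  apply: le_trans (pr_laplace_abs_ge_ln b'_gt0 lapX1 _ M_ge1) _.
  rewrite -[beta / 2]invf_div lef_pV2 ?posrE ?divr_gt0 ?(lt_trans ltr01 M_gt1) //.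
  by rewrite le_max lexx orbT.
apply: (@le_trans _ _ (beta / 4 + beta / 8 + beta / 8 + beta / 2)); last lra.
repeat apply: pr_setU_le_add => //.
all: by repeat apply: measurableU => //.
Qed.

Let accuracy_event_of_small_noise : ~` accuracy_failure `<=` accuracy_event.
Proof.
move=> w; rewrite /accuracy_failure !setCU => -[[[]]].
move=> /negP; rewrite -ltNge => /ltr_normlP[X0_lo X0_hi].
move=> /negP; rewrite -ltNge => Xi0_big Xj_none.
move=> /negP; rewrite -ltNge => /ltr_normlP[]; rewrite ltrNl => X1_lo X1_hi.
have pass_i0 : round_passes e eps beta X i0 w.
  by apply: round_passes_of_maxdeg_le => //; rewrite threshold_eq; lra.
have [i stop_i i_le] := stops_at_first pass_i0.
exists i; split => //.
have Xi_small : X i.+2 w < b * (L + ln k).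
  have -> : L + ln k = ln (4 / beta * k) by rewrite [in RHS]lnM // posrE ?k_gt0 ?divr_gt0.
  rewrite ltNge; apply/negP => Xi_big.
  exact/Xj_none/(@bigsetU_sup _ i i0.+1 large_round_noise).
have := stop_i.1; rewrite /round_passes /Q_delN threshold_eq => pass_i.
have := N_at_least_tau_star_le e i X1_lo; rewrite -(ler_nat R) => N_le.
have pow_le : (2 ^ i)%:R <= 2 * D%:R :> R.
  have D_gt0 := maxdeg_gt0 _ _ has_edge.
  rewrite -natrM ler_nat (leq_trans _ (exp2_up_log_le_double _ D_gt0)) //.
  by rewrite leq_exp2l.
have lnk_ge0 : 0 <= b * ln k by apply: mulr_ge0; [exact: ltW | exact: ln_ge0].
by rewrite tau_starE in N_le *; split; lra.
Qed.

Let measurable_accuracy_event : measurable accuracy_event.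
Proof.
apply: measurable_stopping_event => // i.
have mtau := measurable_tau_star e eps beta delta X i (measurable_X 1).
apply: measurableI; apply: measurable_ler => //.
exact: measurableT_comp (measurable_N_at_least e) mtau.
Qed.

Lemma accuracy_guarantee : ((1 - beta)%:E <= P accuracy_event)%E.
Proof.
exact: probability_ge_of_bad_event measurable_accuracy_event
  measurable_accuracy_failure pr_accuracy_failure accuracy_event_of_small_noise.
Qed.

Local Notation a := (b * ln (2 / delta)).

Let two_delta_ge1 : 1 <= 2 / delta.
Proof. by rewrite ler_pdivlMr // mul1r (le_trans (ltW delta_lt1)) // ler1n. Qed.

Let late_rounds m := [set i | i \in index_iota i0.+2 (i0.+2 + m)].

Let N_le_tau_star_event := [set w | exists i, stops_at e eps beta X i w /\
  tau_star e eps beta delta X i w + (N_at_least e (tau_star e eps beta delta X i w))%:R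
    <= 2 * tau_star e eps beta delta X i w].

Let late_noise_small m := \bigcap_(i in late_rounds m) (X i @^-1` `]-oo, a[).

Let measurable_late_noise_small m : measurable (late_noise_small m).
Proof.
apply: bigcap_measurableType => i _; rewrite -[X in measurable X]setTI.
exact: measurable_X.
Qed.

#[local] Hint Resolve measurable_late_noise_small : core.

(* Failure budget delta/2 + delta/4 + delta/4 once m is chosen with
   (1 - delta/4)^m <= delta/4. *)
Let N_le_tau_star_failure m :=
  [set w | X 1%N w <= - (2 / eps * ln M)] `|` [set w | a <= X 0%N w]
  `|` late_noise_small m.

Let measurable_N_le_tau_star_failure m : measurable (N_le_tau_star_failure m).
Proof. by repeat apply: measurableU. Qed.

Let pr_late_noise_small m : P (late_noise_small m) = ((1 - delta / 4) ^+ m)%:E.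
Proof.
rewrite /late_noise_small indepX ?iota_uniq // (eq_big_seq (fun=> (1 - delta / 4)%:E)).
  by rewrite prodEFin prodr_const_nat addKn.
move=> [|[|i]]; rewrite mem_index_iota // => _.
rewrite (probability_laplace_lt_ln b_gt0 (lapX2 i) _ two_delta_ge1).
by congr (1 - _)%:E; field; rewrite gt_eqF.
Qed.

Let pr_N_le_tau_star_failure m :
  pr P (N_le_tau_star_failure m) <= delta / 2 + delta / 4 + (1 - delta / 4) ^+ m.
Proof.
have p1 : pr P [set w | X 1%N w <= - (2 / eps * ln M)] <= delta / 2.
  rewrite (pr_laplace_le_ln b'_gt0 lapX1 _ M_ge1) invfM mulrC ler_pM2r ?invr_gt0 //.
  by rewrite invf_ple ?posrE ?(lt_trans ltr01 M_gt1) // le_max lexx.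
have p2 : pr P [set w | a <= X 0%N w] <= delta / 4.
  rewrite (pr_laplace_ge_ln b_gt0 lapX0 _ two_delta_ge1).
  by rewrite (_ : (2 * (2 / delta))^-1 = delta / 4) //; field; rewrite gt_eqF.
have p3 : pr P (late_noise_small m) <= (1 - delta / 4) ^+ m.
  by rewrite /pr pr_late_noise_small.
by repeat apply: pr_setU_le_add => //; exact: measurableU.
Qed.

Let N_le_tau_star_of_no_failure m : ~` N_le_tau_star_failure m `<=` N_le_tau_star_event.
Proof.
move=> w; rewrite /N_le_tau_star_failure /late_noise_small !setCU => -[[]].
move=> /negP; rewrite -ltNge => X1_big.
move=> /negP; rewrite -ltNge => X0_small.
move=> /existsNP [j] /not_implyP [+ /negP]; rewrite /= in_itv /= -leNgt.
case: j => [|[|j]]; rewrite /late_rounds /= mem_index_iota // => /andP[i0_le _] Xj_big.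
have pass_j : round_passes e eps beta X j w.
  apply: round_passes_of_maxdeg_le; first by apply: leq_trans D_le _; rewrite leq_exp2l.
  have : 0 < b * L by rewrite mulr_gt0.
  by rewrite threshold_eq; lra.
have [i stop_i _] := stops_at_first pass_j.
exists i; split => //.
have := N_at_least_tau_star_le e i X1_big; rewrite -(ler_nat R) tau_starE.
have : 0 <= (2 ^ i)%:R :> R by [].
lra.
Qed.

Let measurable_N_le_tau_star_event : measurable N_le_tau_star_event.
Proof.
apply: measurable_stopping_event => // i.
have mtau := measurable_tau_star e eps beta delta X i (measurable_X 1).
apply: measurable_ler; last exact: measurable_funM.
exact: measurable_funD (measurableT_comp (measurable_N_at_least e) mtau).
Qed.

Lemma N_le_tau_star_guarantee : ((1 - delta)%:E <= P N_le_tau_star_event)%E.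
Proof.
have [m geom_small] : exists m, (1 - delta / 4) ^+ m <= delta / 4.
  apply: exists_expr_le; rewrite ?gtrBl ?divr_gt0 // subr_ge0 ler_pdivrMr // mul1r.
  by rewrite (le_trans (ltW delta_lt1)) // ler1n.
apply: probability_ge_of_bad_event measurable_N_le_tau_star_event
  (measurable_N_le_tau_star_failure m) _ (N_le_tau_star_of_no_failure m).
by apply: le_trans (pr_N_le_tau_star_failure m) _; lra.
Qed.

End noisy_doubling_guarantees.

Theorem mainTheorem5 (R : realType) (d : measure_display) (Omega : measurableType d)
  (P : probability Omega R) (V : finType) (e : rel V)
  (eps beta delta : R) (X : nat -> Omega -> R) :
  simple_graph e -> (exists x y, e x y) ->
  0 < eps -> 0 < beta < 1 -> 0 < delta < 1 ->
  is_laplace P (4 / eps) (X 0%N) ->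
  is_laplace P (2 / eps) (X 1%N) ->
  (forall i, is_laplace P (4 / eps) (X i.+2)) ->
  mutually_independent P X ->
  ((1 - beta)%:E <= P [set w | exists i, stops_at e eps beta X i w /\
      (tau_star e eps beta delta X i w <=
        2 * (maxdeg e)%:R + (8 / eps) * ln (log2 (4 * (maxdeg e)%:R))
        + (16 / eps) * ln (4 / beta)
        + (4 / eps) * ln (Num.max (delta^-1) (2 / beta)) + 1 /\
      (N_at_least e (tau_star e eps beta delta X i w))%:R <=
        (8 / eps) * ln (log2 (4 * (maxdeg e)%:R)) + (16 / eps) * ln (4 / beta))%R]
   /\
   (1 - delta)%:E <= P [set w | exists i, stops_at e eps beta X i w /\
      (tau_star e eps beta delta X i w
        + (N_at_least e (tau_star e eps beta delta X i w))%:R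
      <= 2 * tau_star e eps beta delta X i w)%R])%E.
Proof.
move=> _ has_edge eps_gt0 /andP[beta_gt0 beta_lt1] /andP[delta_gt0 delta_lt1].
move=> lapX0 lapX1 lapX2 indepX; split.
- exact: accuracy_guarantee.
- exact: N_le_tau_star_guarantee.
Qed.
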